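(* Let $N_0\in\mathbb{N}$. Let $E=E(a_1,\dots,a_n)$ and $E'=E(b_1,\dots,b_n)$ be bounded ellipsoids in $\mathbb{R}^{2n}$ ($0<a_1\le\dots\le a_n<\infty$, $0<b_1\le\dots\le b_n<\infty$). Suppose an increasing sequence $d_1\le d_2\le\dots$ of real numbers is obtained from the sequence $c_1^{\mathrm{EH}}(E)\le c_2^{\mathrm{EH}}(E)\le\dots$ by removing at most $N_0$ terms, and is also obtained from $c_1^{\mathrm{EH}}(E')\le c_2^{\mathrm{EH}}(E')\le\dots$ by removing at most $N_0$ terms. Then $E=E'$, i.e. $a_i=b_i$ for all $i$. (In other words, a bounded ellipsoid can be recovered uniquely from its Ekeland–Hofer sequence with at most $N_0$ terms removed.)
   Context: $E(a_1,\dots,a_n)=\{z\in\mathbb{C}^n:\sum_j|z_j|^2/a_j<1\}$. The Ekeland–Hofer capacities on ellipsoids are given as follows: writing the numbers $m\,a_i\pi$ ($m\in\mathbb{N}$, $1\le i\le n$) in increasing order with repetitions as $\delta_1\le \delta_2\le\dots$, one has $c_k^{\mathrm{EH}}(E(a_1,\dots,a_n))=\delta_k$. Removing terms means deleting entries (counted with multiplicity) from the sequence. *)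

(* concrete reals R, PI. Indices are 0-based. *)
From Stdlib Require Import Reals List Arith Lia.
Open Scope R_scope.

Definition ellipsoid_params (n : nat) (a : nat -> R) : Prop :=
  0 < a 0%nat /\ forall i, (S i < n)%nat -> a i <= a (S i).

(* The ellipsoid itself, as a subset of C^n = R^{2n} (z_j = x j + i y j). *)
Definition ellipsoid (n : nat) (a : nat -> R) (x y : nat -> R) : Prop :=
  sum_f_R0 (fun j => if Nat.ltb j n then (x j ^ 2 + y j ^ 2) / a j else 0)
           (Nat.pred n) < 1.

(* c is the Ekeland–Hofer sequence of E(a): the numbers (m+1) * a_i * PI,
   (m : nat, i < n) listed in nondecreasing order with repetitions.
   c k is the (k+1)-th EH capacity c_{k+1}^{EH}(E(a)). *)
Definition is_EH_seq (n : nat) (a : nat -> R) (c : nat -> R) : Prop :=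
  (forall k l, (k <= l)%nat -> c k <= c l) /\
  exists f : nat -> nat * nat,
    (forall k, (fst (f k) < n)%nat) /\
    (forall k l, f k = f l -> k = l) /\
    (forall i m, (i < n)%nat -> exists k, f k = (i, m)) /\
    (forall k, c k = INR (S (snd (f k))) * a (fst (f k)) * PI).

(* d is obtained from c by removing at most N0 terms (counted with
   multiplicity, i.e. positions): d = c o s with s strictly increasing and
   at most N0 indices outside the range of s. *)
Definition removes_at_most (N0 : nat) (c d : nat -> R) : Prop :=
  exists s : nat -> nat,
    (forall k, (s k < s (S k))%nat) /\
    (forall k, d k = c (s k)) /\
    exists L : list nat, (length L <= N0)%nat /\
      forall j, (forall k, s k <> j) -> In j L.

(* Deleting finitely many terms of a sequence leaves its tail unchanged up to
   a shift, so the EH sequences of E and E' agree from some point on.  If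
   a_i < b_i is the first difference, pick a large multiple x = (m+1) a_i pi
   that is no multiple of b_i pi, ..., b_{n-1} pi (possible since b_j > a_i:
   step along a progression of m's avoiding every rational ratio b_j / a_i).
   Matching the occurrences of x in the common tail sends every axis j <= i
   of E with x in a_j pi N injectively to an axis j' < i of E' with x in
   b_j' pi N = a_j' pi N; since j = i qualifies, this violates pigeonhole. *)
From Stdlib Require Import Reals List Arith.
From Stdlib Require Import Lia Lra ClassicalEpsilon.
Open Scope R_scope.

Lemma strictly_increasing_le (s : nat -> nat) :
  (forall k, (s k < s (S k))%nat) ->
  forall k l, (k <= l)%nat -> (s k <= s l)%nat.
Proof.
  intros Hs k l Hkl; induction Hkl as [|l _ IH]; [lia|].
  specialize (Hs l); lia.
Qed.

Lemma strictly_increasing_ge_id (s : nat -> nat) :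
  (forall k, (s k < s (S k))%nat) -> forall k, (k <= s k)%nat.
Proof.
  intros Hs k; induction k as [|k IH]; [lia|].
  specialize (Hs k); lia.
Qed.

Lemma strictly_increasing_gap (s : nat -> nat) (k j : nat) :
  (forall k, (s k < s (S k))%nat) ->
  (s k < j < s (S k))%nat -> forall k', s k' <> j.
Proof.
  intros Hs Hj k' <-.
  destruct (le_lt_dec k' k) as [Hk | Hk].
  - pose proof (strictly_increasing_le s Hs _ _ Hk); lia.
  - pose proof (strictly_increasing_le s Hs _ _ Hk); lia.
Qed.

Lemma removes_at_most_tail (N0 : nat) (c d : nat -> R) :
  removes_at_most N0 c d -> exists K p, forall t, d (K + t)%nat = c (p + t)%nat.
Proof.
  intros [s [Hs [Hd [L [_ HL]]]]].
  set (B := list_max L).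
  assert (Hmissed : forall j, (forall k, s k <> j) -> (j <= B)%nat).
  { intros j Hj. pose proof (proj1 (list_max_le L B) (le_n B)) as HB.
    rewrite Forall_forall in HB. exact (HB j (HL j Hj)). }
  assert (Hconsecutive : forall k, (B <= s k)%nat -> s (S k) = S (s k)).
  { intros k Hk. pose proof (Hs k).
    destruct (Nat.eq_dec (s (S k)) (S (s k))) as [|Hne]; [assumption|].
    assert (S (s k) <= B)%nat
      by (apply Hmissed, (strictly_increasing_gap s k); [exact Hs | lia]).
    lia. }
  exists B, (s B). intro t. rewrite Hd. f_equal.
  induction t as [|t IH]; [now rewrite !Nat.add_0_r|].
  pose proof (strictly_increasing_ge_id s Hs (B + t)).
  rewrite Nat.add_succ_r, Hconsecutive, IH; lia.
Qed.

Lemma removes_at_most_common_tail (N0 : nat) (c c' d : nat -> R) :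
  removes_at_most N0 c d -> removes_at_most N0 c' d ->
  exists P P', forall t, c (P + t)%nat = c' (P' + t)%nat.
Proof.
  intros Hc Hc'.
  destruct (removes_at_most_tail _ _ _ Hc) as [K [p Hp]].
  destruct (removes_at_most_tail _ _ _ Hc') as [K' [p' Hp']].
  exists (p + K')%nat, (p' + K)%nat. intro t.
  rewrite <- !Nat.add_assoc, <- Hp, <- Hp'. f_equal; lia.
Qed.

Lemma NoDup_length_le_rel {A B : Type}
  (eqB : forall x y : B, {x = y} + {x <> y}) (Rel : A -> B -> Prop)
  (l : list A) (l' : list B) :
  NoDup l -> (forall x, In x l -> exists y, In y l' /\ Rel x y) ->
  (forall x1 x2 y, Rel x1 y -> Rel x2 y -> x1 = x2) ->
  (length l <= length l')%nat.
Proof.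
  revert l'; induction l as [|x l IH]; intros l' Hnd Hex Hinj; [simpl; lia|].
  inversion Hnd as [|? ? Hx Hnd']; subst.
  destruct (Hex x (or_introl eq_refl)) as [y [Hy Hxy]].
  pose proof (remove_length_lt eqB l' y Hy).
  enough (length l <= length (remove eqB y l'))%nat by (simpl; lia).
  apply IH; [exact Hnd' | | exact Hinj].
  intros x' Hx'. destruct (Hex x' (or_intror Hx')) as [y' [Hy' Hxy']].
  exists y'. split; [|exact Hxy'].
  apply in_in_remove; [|exact Hy'].
  intros ->. apply Hx. rewrite (Hinj x x' y Hxy Hxy'). exact Hx'.
Qed.

Lemma pigeonhole_below (Q : nat -> Prop) (Rel : nat -> nat -> Prop) (i : nat) :
  Q i ->
  (forall j, (j <= i)%nat -> Q j -> exists j', (j' < i)%nat /\ Q j' /\ Rel j j') ->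
  (forall j1 j2 j', Rel j1 j' -> Rel j2 j' -> j1 = j2) -> False.
Proof.
  intros Qi Hmap Hinj.
  set (q := fun j => if excluded_middle_informative (Q j) then true else false).
  assert (Hq : forall j, q j = true <-> Q j).
  { intro j. unfold q. destruct (excluded_middle_informative (Q j)); now split. }
  assert (Hlen : length (filter q (seq 0 (S i))) = S (length (filter q (seq 0 i)))).
  { rewrite seq_S, filter_app, length_app. simpl.
    destruct (q i) eqn:E; [simpl; lia|]. apply Hq in Qi. congruence. }
  enough (length (filter q (seq 0 (S i))) <= length (filter q (seq 0 i)))%nat by lia.
  apply (NoDup_length_le_rel Nat.eq_dec Rel); [apply NoDup_filter, seq_NoDup | | exact Hinj].
  intros j Hj. apply filter_In in Hj as [Hj Qj]. apply in_seq in Hj. apply Hq in Qj.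
  destruct (Hmap j ltac:(lia) Qj) as [j' [Hj' [Qj' Hjj']]].
  exists j'. split; [|exact Hjj'].
  apply filter_In. split; [apply in_seq; lia | now apply Hq].
Qed.

Lemma multiple_avoiding_one (v t : R) : 0 < v < t ->
  exists E : nat, (1 <= E)%nat /\ forall N q : nat, INR (S (N * E)) * v <> INR q * t.
Proof.
  intros Hv.
  destruct (classic (exists E m : nat, (1 <= E)%nat /\ INR E * v = INR m * t))
    as [[E [m [HE Hm]]] | Hnone].
  - (* E v = m t turns (N E + 1) v = q t into v = (q - N m) t, impossible as 0 < v < t *)
    exists E. split; [exact HE|]. intros N q Heq.
    rewrite S_INR, mult_INR in Heq.
    assert (Hv' : v = (INR q - INR N * INR m) * t).
    { rewrite Rmult_minus_distr_r, Rmult_assoc, <- Hm, <- Heq. ring. }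
    destruct (le_lt_dec q (N * m)) as [Hqm | Hqm].
    + apply le_INR in Hqm. rewrite mult_INR in Hqm.
      assert (0 <= (INR N * INR m - INR q) * t) by (apply Rmult_le_pos; lra).
      lra.
    + apply le_INR in Hqm. rewrite S_INR, mult_INR in Hqm.
      assert (0 <= (INR q - INR N * INR m - 1) * t) by (apply Rmult_le_pos; lra).
      lra.
  - exists 1%nat. split; [lia|]. intros N q Heq.
    apply Hnone. exists (S (N * 1)), q. split; [lia | exact Heq].
Qed.

Lemma multiple_avoiding (v : R) (l : list R) : 0 < v -> (forall t, In t l -> v < t) ->
  exists D : nat, (1 <= D)%nat /\
    forall N q t, In t l -> INR (S (N * D)) * v <> INR q * t.
Proof.
  intros Hv. induction l as [|t l IH]; intros Hl.
  - exists 1%nat. split; [lia | intros N q t []].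
  - destruct IH as [D [HD Havoid]]; [intros t' Ht'; apply Hl; now right|].
    destruct (multiple_avoiding_one v t) as [E [HE Havoid_t]].
    { split; [lra | apply Hl; now left]. }
    exists (D * E)%nat. split; [nia|]. intros N q t' [<- | Ht'].
    + replace (N * (D * E))%nat with (N * D * E)%nat by ring. apply Havoid_t.
    + replace (N * (D * E))%nat with (N * E * D)%nat by ring. now apply Havoid.
Qed.

Lemma large_multiple_avoiding (v M : R) (l : list R) :
  0 < v -> (forall t, In t l -> v < t) ->
  exists m : nat, M < INR (S m) * v /\
    forall q t, In t l -> INR (S m) * v <> INR q * t.
Proof.
  intros Hv Hl. destruct (multiple_avoiding v l Hv Hl) as [D [HD Havoid]].
  destruct (INR_unbounded (M / v)) as [N HN].
  exists (N * D)%nat. split; [|apply Havoid].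
  apply (Rmult_gt_compat_r v) in HN; [|exact Hv].
  unfold Rdiv in HN. rewrite Rmult_assoc, Rinv_l, Rmult_1_r in HN; [|lra].
  assert (INR N <= INR (S (N * D))) by (apply le_INR; nia).
  nra.
Qed.

Lemma ellipsoid_params_le (n : nat) (a : nat -> R) : ellipsoid_params n a ->
  forall j k, (j <= k)%nat -> (k < n)%nat -> a j <= a k.
Proof.
  intros [_ Ha] j k Hjk. induction Hjk as [|k _ IH]; intros Hk; [lra|].
  specialize (Ha k Hk). specialize (IH ltac:(lia)). lra.
Qed.

Lemma ellipsoid_params_pos (n : nat) (a : nat -> R) : ellipsoid_params n a ->
  forall j, (j < n)%nat -> 0 < a j.
Proof.
  intros Ha j Hj. pose proof (ellipsoid_params_le n a Ha 0 j ltac:(lia) Hj).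
  destruct Ha. lra.
Qed.

Record axis_labelling (n : nat) (a c : nat -> R) (g : nat -> nat) : Prop := {
  axis_lt : forall k, (g k < n)%nat;
  axis_value : forall k, exists m, c k = INR (S m) * a (g k) * PI;
  axis_attained : forall j m, (j < n)%nat ->
    exists k, g k = j /\ c k = INR (S m) * a j * PI;
  axis_level_inj : forall k l, g k = g l -> c k = c l -> k = l }.

Lemma is_EH_seq_axis_labelling (n : nat) (a c : nat -> R) :
  ellipsoid_params n a -> is_EH_seq n a c -> exists g, axis_labelling n a c g.
Proof.
  intros Ha [_ [f [Hlt [Hinj [Hsurj Hval]]]]].
  exists (fun k => fst (f k)). split.
  - exact Hlt.
  - intro k. exists (snd (f k)). apply Hval.
  - intros j m Hj. destruct (Hsurj j m Hj) as [k Hk].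
    exists k. rewrite Hval, Hk. now split.
  - intros k l Hkl Hc. apply Hinj.
    rewrite !Hval, <- Hkl in Hc.
    pose proof (ellipsoid_params_pos n a Ha _ (Hlt k)) as Hpos.
    pose proof PI_RGT_0.
    assert (Hm : INR (S (snd (f k))) = INR (S (snd (f l)))).
    { apply (Rmult_eq_reg_r (a (fst (f k)) * PI)); [|nra]. rewrite <- !Rmult_assoc. exact Hc. }
    apply INR_eq in Hm. injection Hm as Hm.
    destruct (f k), (f l). simpl in *. now subst.
Qed.

Lemma common_tail_first_axis_not_lt (n : nat) (a b c c' : nat -> R) (g g' : nat -> nat)
  (P P' i : nat) :
  ellipsoid_params n a -> ellipsoid_params n b ->
  (forall k l, (k <= l)%nat -> c k <= c l) ->
  axis_labelling n a c g -> axis_labelling n b c' g' ->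
  (forall t, c (P + t)%nat = c' (P' + t)%nat) ->
  (i < n)%nat -> (forall j, (j < i)%nat -> a j = b j) -> ~ a i < b i.
Proof.
  intros Ha Hb Hmono Hg Hg' Htail Hi Hbelow Hlt.
  pose proof PI_RGT_0 as HPI.
  assert (Hv : 0 < a i * PI) by (pose proof (ellipsoid_params_pos n a Ha i Hi); nra).
  destruct (large_multiple_avoiding (a i * PI) (c P)
              (map (fun j => b j * PI) (seq i (n - i))) Hv) as [m [Hlarge Havoid]].
  { intros t Ht. apply in_map_iff in Ht as [j [<- Hj]]. apply in_seq in Hj.
    pose proof (ellipsoid_params_le n b Hb i j ltac:(lia) ltac:(lia)). nra. }
  set (x := INR (S m) * (a i * PI)) in *.
  set (shift := fun k => (P' + (k - P))%nat).
  assert (Hshift : forall k, (P <= k)%nat -> c' (shift k) = c k).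
  { intros k Hk. unfold shift. rewrite <- Htail. f_equal. lia. }
  apply (pigeonhole_below (fun j => exists m, x = INR (S m) * a j * PI)
           (fun j j' => exists k, (P <= k)%nat /\ g k = j /\ g' (shift k) = j' /\ c k = x) i).
  - exists m. unfold x. ring.
  - intros j Hj [mj Hmj].
    destruct (axis_attained _ _ _ _ Hg j mj ltac:(lia)) as [k [Hgk Hck]].
    rewrite <- Hmj in Hck.
    assert (HPk : (P <= k)%nat).
    { destruct (le_lt_dec P k) as [|HkP]; [assumption|].
      pose proof (Hmono k P ltac:(lia)). lra. }
    destruct (axis_value _ _ _ _ Hg' (shift k)) as [m' Hm'].
    rewrite Hshift, Hck in Hm' by exact HPk.
    assert (Hj'i : (g' (shift k) < i)%nat).
    { destruct (lt_dec (g' (shift k)) i) as [|Hge]; [assumption|exfalso].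
      apply (Havoid (S m') (b (g' (shift k)) * PI)).
      - apply in_map_iff. exists (g' (shift k)). split; [reflexivity|].
        apply in_seq. pose proof (axis_lt _ _ _ _ Hg' (shift k)). lia.
      - rewrite Hm'. ring. }
    exists (g' (shift k)). split; [exact Hj'i|]. split.
    + exists m'. rewrite Hbelow by exact Hj'i. exact Hm'.
    + exists k. repeat split; assumption.
  - intros j1 j2 j' [k1 [HP1 [<- [Hg1 Hc1]]]] [k2 [HP2 [<- [Hg2 Hc2]]]].
    assert (Hsk : shift k1 = shift k2).
    { apply (axis_level_inj _ _ _ _ Hg'); [congruence|].
      rewrite !Hshift by assumption. congruence. }
    unfold shift in Hsk. f_equal. lia.
Qed.

Theorem mainTheorem3 (N0 n : nat) (a b c c' d : nat -> R) :
  ellipsoid_params n a -> ellipsoid_params n b ->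
  is_EH_seq n a c -> is_EH_seq n b c' ->
  (forall k l, (k <= l)%nat -> d k <= d l) ->
  removes_at_most N0 c d -> removes_at_most N0 c' d ->
  forall i, (i < n)%nat -> a i = b i.
Proof.
  intros Ha Hb Hc Hc' _ Hd Hd'.
  destruct (removes_at_most_common_tail _ _ _ _ Hd Hd') as [P [P' Htail]].
  destruct (is_EH_seq_axis_labelling n a c Ha Hc) as [g Hg].
  destruct (is_EH_seq_axis_labelling n b c' Hb Hc') as [g' Hg'].
  intro i. induction i as [i IH] using lt_wf_ind. intros Hi.
  assert (Hbelow : forall j, (j < i)%nat -> a j = b j) by (intros j Hj; apply IH; lia).
  destruct (Rtotal_order (a i) (b i)) as [Hlt | [Heq | Hgt]]; [exfalso | exact Heq | exfalso].
  - exact (common_tail_first_axis_not_lt n a b c c' g g' P P' i Ha Hb (proj1 Hc)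
             Hg Hg' Htail Hi Hbelow Hlt).
  - refine (common_tail_first_axis_not_lt n b a c' c g' g P' P i Hb Ha (proj1 Hc')
              Hg' Hg (fun t => eq_sym (Htail t)) Hi _ Hgt).
    intros j Hj. symmetry. now apply Hbelow.
Qed.
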